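(* Let $n\geqslant 1$ and $r\geqslant 1$ be integers and let $S$ be a set of real $n\times n$ matrices, each of rank $r$, such that there exists $N$ with the property that every product $M_1M_2\cdots M_\ell$ with $\ell\geqslant N$ and $M_i\in S$ has rank at most $r-1$. Then every product $M_1M_2\cdots M_{2^{n+1}}$ of $2^{n+1}$ elements $M_i\in S$ has rank at most $r-1$. *)

From mathcomp Require Import all_boot all_algebra.
From Stdlib Require Reals.
From mathcomp Require Import Rstruct.
Notation R := Rdefinitions.R.
Set Implicit Arguments. Unset Strict Implicit. Unset Printing Implicit Defensive.
Local Open Scope ring_scope.

Definition mxprod (n : nat) (s : seq 'M[R]_n) : 'M[R]_n :=
  foldr (fun A B => A *m B) 1%:M s.

(* Suppose a product A_0 ... A_(L-1) of L = 2^(n+1) matrices of S had rank r.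
   Then every consecutive product A_a A_(a+1) has rank r, while A_b A_c has rank
   < r for c <= b: otherwise A_c ... A_b would close up into a cycle, and by
   Frobenius' inequality repeating it gives arbitrarily long products of rank r.
   Factor each rank-r matrix as X = C_X R_X with R_X (r x n) row-free and C_X
   (n x r) column-free; then rank (X Z) = r iff det (R_X C_Z) != 0.  Hence the
   matrix (det (R_(A_b) C_(A_(a+1))))_(b,a) of size L-1 is triangular with
   nonzero diagonal, while by Cauchy-Binet its rows lie in the span of the rows
   (det of the I-rows of C_(A_(a+1)))_a, one per r-subset I of {1..n}.  So
   L - 1 <= 2^n, which is false. *)

From mathcomp Require Import all_boot all_algebra all_fingroup.
From mathcomp Require Import Rstruct zify.
Set Implicit Arguments.
Unset Strict Implicit.
Unset Printing Implicit Defensive.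
Import GRing.Theory.

Lemma sorted_nth_path (T : eqType) (e : rel T) x0 s i j :
  sorted e s -> (i <= j < size s)%N ->
  exists t, [/\ path e (nth x0 s i) t, last (nth x0 s i) t = nth x0 s j
              & {subset t <= s}].
Proof.
move=> sorted_s /andP[le_ij lt_js]; have lt_is := leq_ltn_trans le_ij lt_js.
have drop_i : drop i s = nth x0 s i :: drop i.+1 s by rewrite (drop_nth x0).
exists (take (j - i) (drop i.+1 s)); split.
- by apply: take_path; have := drop_sorted i sorted_s; rewrite drop_i.
- have size_t : size (take (j - i) (drop i.+1 s)) = j - i.
    by rewrite size_takel // size_drop; lia.
  rewrite (last_nth x0) size_t -[_ :: _]/(take (j - i).+1 (nth x0 s i :: _)) -drop_i.
  by rewrite nth_take // nth_drop subnKC.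
- by move=> x /mem_take /mem_drop.
Qed.

Lemma path_repeat_cycle (T : Type) (e : rel T) x t k :
  path e x t -> e (last x t) x -> path e x (t ++ flatten (nseq k (x :: t))).
Proof.
move=> path_t closed; elim: k => [|k IH]; first by rewrite cats0.
by rewrite /= cat_path path_t /= closed.
Qed.

Lemma mem_flatten_nseq (T : eqType) k (t : seq T) : {subset flatten (nseq k t) <= t}.
Proof. by elim: k => [|k IH] x //=; rewrite mem_cat => /orP[// | /IH]. Qed.

Lemma size_flatten_nseq (T : Type) k (t : seq T) : size (flatten (nseq k t)) = (k * size t)%N.
Proof. by elim: k => [|k IH] //=; rewrite size_cat IH mulSn. Qed.

Local Open Scope ring_scope.

Lemma perm_of_codom_sub (T : finType) (U : eqType) (g g' : T -> U) :
  injective g -> {subset codom g <= codom g'} -> exists s : {perm T}, g =1 g' \o s.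
Proof.
move=> g_inj sub_gg'.
pose f i := iinv (sub_gg' _ (codom_f g i)).
have fK i : g' (f i) = g i by rewrite f_iinv.
have f_inj : injective f by move=> i j eq_f; apply: g_inj; rewrite -!fK eq_f.
by exists (perm f_inj) => i; rewrite /= permE fK.
Qed.

Lemma det_mulmx_rowsub (F : fieldType) r n (B : 'M[F]_(r, n)) (Y : 'M[F]_(n, r)) :
  \det (B *m Y) =
    \sum_(g : {ffun 'I_r -> 'I_n}) (\prod_i B i (g i)) * \det (rowsub g Y).
Proof.
rewrite /determinant.
transitivity (\sum_(s : 'S_r) \sum_(g : {ffun 'I_r -> 'I_n})
   (\prod_i B i (g i)) * ((-1) ^+ s * \prod_i Y (g i) (s i))).
  apply: eq_bigr => s _.
  rewrite (eq_bigr (fun i => \sum_k B i k * Y k (s i))); last by move=> i _; rewrite mxE.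
  rewrite bigA_distr_bigA /= mulr_sumr; apply: eq_bigr => g _.
  by rewrite big_split /= mulrCA.
rewrite exchange_big /=; apply: eq_bigr => g _.
rewrite mulr_sumr; apply: eq_bigr => s _.
by congr (_ * (_ * _)); apply: eq_bigr => i _; rewrite mxE.
Qed.

Section Minors.
Variables (F : fieldType) (m r n : nat) (Y : 'I_m -> 'M[F]_(n, r)).

Definition minor_row (g : 'I_r -> 'I_n) : 'rV[F]_m := \row_a \det (rowsub g (Y a)).

Lemma minor_row_eq0 g : ~~ injectiveb g -> minor_row g = 0.
Proof.
case/injectivePn=> i [j neq_ij eq_gij]; apply/rowP=> a; rewrite !mxE.
by apply: (determinant_alternate neq_ij) => k; rewrite !mxE eq_gij.
Qed.

Lemma minor_row_perm g (s : {perm 'I_r}) :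
  minor_row (g \o s) = (-1) ^+ s *: minor_row g.
Proof.
apply/rowP=> a; rewrite !mxE rowsub_comp -row_permEsub row_permE.
by rewrite det_mulmx det_perm.
Qed.

Definition minor_rows : 'M[F]_(#|{set 'I_n}|, m) :=
  \matrix_k if [pick g : {ffun 'I_r -> 'I_n} |
                injectiveb g && ([set x in codom g] == enum_val k)] is Some g
            then minor_row g else 0.

Lemma minor_row_sub (g : {ffun 'I_r -> 'I_n}) : (minor_row g <= minor_rows)%MS.
Proof.
have [g_inj | /minor_row_eq0 ->] := boolP (injectiveb g); last exact: sub0mx.
pose k := enum_rank [set x in codom g].
have row_k : row k minor_rows = if [pick g' : {ffun 'I_r -> 'I_n} |
    injectiveb g' && ([set x in codom g'] == enum_val k)] is Some g'
    then minor_row g' else 0 by apply/rowP => a; rewrite !mxE.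
move: row_k; case: pickP => [g' /andP[_ /eqP codom_g'] row_k | no_g']; last first.
  by have := no_g' g; rewrite g_inj /k enum_rankK eqxx.
rewrite /k enum_rankK in codom_g'.
have [|s eq_g] := @perm_of_codom_sub _ _ g g' (injectiveP _ g_inj).
  by move=> x; rewrite -[x \in codom g]inE -codom_g' inE.
rewrite (_ : minor_row g = minor_row (g' \o s)); last first.
  by apply/rowP=> a; rewrite !mxE; congr (\det _); apply/matrixP=> i j; rewrite !mxE eq_g.
by rewrite minor_row_perm scalemx_sub // -row_k row_sub.
Qed.
End Minors.

Lemma det_pairing_triangular_bound (F : fieldType) m r n
    (B : 'I_m -> 'M[F]_(r, n)) (Y : 'I_m -> 'M[F]_(n, r)) :
  (forall a, \det (B a *m Y a) != 0) ->
  (forall a b : 'I_m, (a < b)%N -> \det (B b *m Y a) = 0) -> (m <= 2 ^ n)%N.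
Proof.
move=> diag_neq0 upper_eq0.
pose G : 'M[F]_m := \matrix_(b, a) \det (B b *m Y a).
have rank_G : \rank G = m.
  apply: mxrank_unit; rewrite unitmxE unitfE -det_tr det_trig.
    by apply/prodf_neq0 => i _; rewrite !mxE.
  by apply/forallP => i; apply/forallP => j; apply/implyP => lt_ij; rewrite !mxE upper_eq0.
have sub_G : (G <= minor_rows Y)%MS.
  apply/row_subP => b.
  have -> : row b G = \sum_(g : {ffun 'I_r -> 'I_n}) (\prod_i B b i (g i)) *: minor_row Y g.
    apply/rowP => a; rewrite !mxE det_mulmx_rowsub summxE.
    by apply: eq_bigr => g _; rewrite !mxE.
  by apply: summx_sub => g _; apply/scalemx_sub/minor_row_sub.
rewrite -rank_G (leq_trans (mxrankS sub_G)) // (leq_trans (rank_leq_row _)) //.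
by rewrite -cardsT -powersetT card_powerset cardsT card_ord.
Qed.

Section RankFactorization.
Variables (F : fieldType) (n r : nat).
Implicit Types X Z : 'M[F]_n.

Definition rank_factor_row X : 'M[F]_(r, n) := pid_mx r *m row_ebase X.
Definition rank_factor_col X : 'M[F]_(n, r) := col_ebase X *m pid_mx r.

Lemma mul_rank_factors X : \rank X = r -> rank_factor_col X *m rank_factor_row X = X.
Proof.
move=> rank_X; rewrite mulmxA -(mulmxA (col_ebase X)) (pid_mx_id _ _ _ (leqnn r)).
by rewrite -rank_X mulmx_ebase.
Qed.

Lemma row_free_rank_factor_row X : (r <= n)%N -> row_free (rank_factor_row X).
Proof.
move=> le_rn; rewrite /row_free mxrankMfree ?row_free_unit ?row_ebase_unit //.
by rewrite rank_pid_mx.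
Qed.

Lemma mxrank_rank_factor_colM p X (M : 'M[F]_(r, p)) :
  (r <= n)%N -> \rank (rank_factor_col X *m M) = \rank M.
Proof.
move=> le_rn; rewrite -mxrank_tr trmx_mul mxrankMfree ?mxrank_tr //.
rewrite /row_free trmx_mul tr_pid_mx mxrankMfree ?rank_pid_mx //.
by rewrite row_free_unit unitmx_tr col_ebase_unit.
Qed.

Lemma mxrank_mul_rank_factors X Z : \rank X = r -> \rank Z = r ->
  \rank (X *m Z) = \rank (rank_factor_row X *m rank_factor_col Z).
Proof.
move=> rank_X rank_Z; have le_rn : (r <= n)%N by rewrite -rank_X rank_leq_row.
rewrite -{1}(mul_rank_factors rank_X) -{1}(mul_rank_factors rank_Z).
rewrite (mulmxA (_ *m rank_factor_row X)).
rewrite mxrankMfree ?row_free_rank_factor_row // -mulmxA.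
exact: mxrank_rank_factor_colM.
Qed.

Lemma det_rank_factors_neq0 X Z : \rank X = r -> \rank Z = r ->
  (\det (rank_factor_row X *m rank_factor_col Z) != 0) = (\rank (X *m Z) == r).
Proof.
move=> rank_X rank_Z; rewrite mxrank_mul_rank_factors //.
by rewrite -unitfE -unitmxE -row_free_unit.
Qed.
End RankFactorization.

Section RankPreservingProducts.
Variables (n r : nat).
Implicit Types (x : 'M[R]_n) (s t : seq 'M[R]_n).

Definition keeps_rank (A B : 'M[R]_n) := \rank (A *m B) == r.

Lemma sorted_keeps_rank s : {in s, forall M, \rank M = r} ->
  (r <= \rank (mxprod s))%N -> sorted keeps_rank s.
Proof.
elim: s => [|x [|y t] IH] //= rank_s le_r.
have rank_x : \rank x = r by rewrite rank_s ?mem_head.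
apply/andP; split; last first.
  apply: IH => [M M_yt | ]; first by rewrite rank_s // inE M_yt orbT.
  exact: leq_trans le_r (mxrankM_maxr _ _).
rewrite /keeps_rank eqn_leq -{1}rank_x mxrankM_maxl (leq_trans le_r) //=.
by rewrite mulmxA mxrankM_maxl.
Qed.

(* Frobenius' inequality keeps the rank from dropping below [r] along the path. *)
Lemma rank_mxprod_path x t : {in x :: t, forall M, \rank M = r} ->
  path keeps_rank x t -> \rank (mxprod (x :: t)) = r.
Proof.
elim: t x => [|y t IH] x rank_xt /=; first by rewrite mulmx1 rank_xt ?mem_head.
case/andP=> /eqP rank_xy path_t.
have rank_x : \rank x = r by rewrite rank_xt ?mem_head.
have rank_y : \rank y = r by rewrite rank_xt // !inE eqxx orbT.
have rank_yt : \rank (y *m mxprod t) = r.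
  by apply: IH => // M M_yt; rewrite rank_xt // inE M_yt orbT.
apply/eqP; rewrite eqn_leq -{1}rank_x mxrankM_maxl /=.
have := mxrank_Frobenius x y (mxprod t).
by rewrite rank_xy rank_yt rank_y leq_add2l mulmxA.
Qed.

Lemma keeps_rank_cycle_long_products x t N :
  {in x :: t, forall M, \rank M = r} -> path keeps_rank x t ->
  keeps_rank (last x t) x ->
  exists s, [/\ (N <= size s)%N, {subset s <= x :: t} & \rank (mxprod s) = r].
Proof.
move=> rank_xt path_t closed; exists (flatten (nseq N.+1 (x :: t))); split.
- by rewrite size_flatten_nseq /=; nia.
- exact: mem_flatten_nseq.
apply: rank_mxprod_path (path_repeat_cycle N path_t closed).
by move=> M; rewrite -cat_cons mem_cat => /orP[/rank_xt | /mem_flatten_nseq/rank_xt].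
Qed.

Lemma short_products_no_cycle (P : 'M[R]_n -> Prop) N x t : (0 < r)%N ->
  (forall M, P M -> \rank M = r) ->
  (forall s, (N <= size s)%N -> (forall M, M \in s -> P M) ->
     (\rank (mxprod s) <= r.-1)%N) ->
  (forall M, M \in x :: t -> P M) -> path keeps_rank x t -> ~~ keeps_rank (last x t) x.
Proof.
move=> r_gt0 rank_P short_P P_xt path_t; apply/negP => closed.
have [s [long sub_s rank_s]] :=
  keeps_rank_cycle_long_products N (fun M => rank_P M \o P_xt M) path_t closed.
by have := short_P s long (fun M => P_xt M \o sub_s M); rewrite rank_s; lia.
Qed.
End RankPreservingProducts.

Theorem mainTheorem2 (n r : nat) (S : 'M[R]_n -> Prop) :
  (1 <= n)%N -> (1 <= r)%N ->
  (forall M, S M -> \rank M = r) ->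
  (exists N : nat, forall s : seq 'M[R]_n,
      (N <= size s)%N -> (forall M, M \in s -> S M) ->
      (\rank (mxprod s) <= r.-1)%N) ->
  forall s : seq 'M[R]_n,
    size s = (2 ^ n.+1)%N -> (forall M, M \in s -> S M) ->
    (\rank (mxprod s) <= r.-1)%N.
Proof.
move=> n_gt0 r_gt0 rank_S [N short_S] s size_s s_S.
rewrite leqNgt; apply/negP => /(leq_trans (leqSpred r)) le_r.
have rank_s : {in s, forall M, \rank M = r} by move=> M /s_S /rank_S.
have rank_nth i : (i < size s)%N -> \rank (nth 0 s i) = r by move/(mem_nth 0)/rank_s.
have sorted_s := sorted_keeps_rank rank_s le_r.
have no_back c b : (c <= b < size s)%N -> ~~ keeps_rank r (nth 0 s b) (nth 0 s c).
  move=> le_cb; have [t [path_t <- sub_t]] := sorted_nth_path 0 sorted_s le_cb.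
  apply: short_products_no_cycle r_gt0 rank_S short_S _ path_t.
  move=> M /predU1P[-> | /sub_t/s_S //]; apply/s_S/mem_nth.
  by case/andP: le_cb => /leq_ltn_trans; apply.
have lt_size (a : 'I_(size s).-1) : (a.+1 < size s)%N by have := ltn_ord a; lia.
suff : ((size s).-1 <= 2 ^ n)%N.
  have : (2 <= 2 ^ n)%N by rewrite -{1}(expn1 2) leq_pexp2l.
  rewrite size_s expnS; lia.
apply: (@det_pairing_triangular_bound _ _ r n
  (fun a => rank_factor_row r (nth 0 s a)) (fun a => rank_factor_col r (nth 0 s a.+1)))
  => [a | a b lt_ab].
- rewrite det_rank_factors_neq0 ?rank_nth ?(ltnW (lt_size a)) ?lt_size //.
  exact: (sortedP 0 sorted_s) a (lt_size a).
- apply/eqP; rewrite -[_ == 0]negbK det_rank_factors_neq0 ?rank_nth ?lt_size //.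
  + by apply: no_back; rewrite lt_ab ltnW.
  + exact: ltnW (lt_size b).
Qed.
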